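(* Let $(N,v)$ be a TU game and $\delta>0$. Following the Coalition Proposal algorithm (described in the context) for $(N,v)$, if the environment state at some iteration lies in $\Omega(v)$, then the environment state at every subsequent iteration lies in $\Omega(v)$.
   Context: A TU game is a pair $(N,v)$ with $N=\{1,\dots,n\}$ and $v:2^N\to\mathbb{R}$, $v(\emptyset)=0$. Coalition Proposal algorithm with step $\delta$: each player $i$ holds an aspiration $a_i$ and a coalition state $C_i\subseteq N$. In each iteration: a player $i\in N$ is activated at random; $i$ chooses at random a set $S\subseteq N\setminus\{i\}$ and proposes $J=S\cup\{i\}$. If $\sum_{j\in J}a_j+\delta\le v(J)$ (success): $a_i\leftarrow a_i+\delta$; then for every $j\in J$ and every $k\in C_j$ with $k\neq j$, set $C_k\leftarrow\emptyset$; then set $C_j\leftarrow J$ for all $j\in J$. Otherwise (failure): if $C_i=\emptyset$, set $a_i\leftarrow\max(v(\{i\}),a_i-\delta)$. Finally, if $a_i=v(\{i\})$ and $C_i=\emptyset$, set $C_i\leftarrow\{i\}$. The environment state is $(\mathbf{a},\mathcal{C})$ with $\mathbf{a}=(a_1,\dots,a_n)$ and $\mathcal{C}=\{C_i:i\in N\}$ the set of (nonempty) formed coalitions. A feasible environment state is a pair $(\mathbf{a},\mathcal{C})$ with $\mathbf{a}\in\mathbb{R}^n$ and $\mathcal{C}$ a set of pairwise disjoint subsets of $N$ such that $a_i\ge v(\{i\})$ for all $i\in N$ and $\sum_{i\in S}a_i\le v(S)$ for all $S\in\mathcal{C}$. $\Omega(v)$ is the set of feasible environment states. *)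

From HB Require Import structures.
From mathcomp Require Import all_boot all_order all_algebra.
Set Implicit Arguments. Unset Strict Implicit. Unset Printing Implicit Defensive.
Import Order.TTheory GRing.Theory Num.Theory.
Local Open Scope ring_scope.

(* Players N = 'I_n; a TU game is v : {set 'I_n} -> R with v set0 = 0. *)

Record cp_state (R : realFieldType) (n : nat) := CPState {
  asp : 'I_n -> R;
  coal : 'I_n -> {set 'I_n}
}.

Section CP.
Variables (R : realFieldType) (n : nat).
Implicit Types (v : {set 'I_n} -> R) (st : cp_state R n).

(* Coalition update on success with proposal J:
   first C_k <- empty for every j in J and k in C_j with k <> j,
   then C_j <- J for all j in J. *)
Definition success_coal (C : 'I_n -> {set 'I_n}) (J : {set 'I_n}) :
    'I_n -> {set 'I_n} :=
  fun k => if k \in J then J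
           else if [exists j in J, (k \in C j) && (k != j)] then set0
           else C k.

Definition cp_step v (delta : R) (i : 'I_n) (S : {set 'I_n}) st : cp_state R n :=
  let a := asp st in
  let C := coal st in
  let J := i |: S in
  let '(a', C') :=
    if \sum_(j in J) a j + delta <= v J then
      ((fun k => if k == i then a i + delta else a k), success_coal C J)
    else
      ((fun k => if (k == i) && (C i == set0)
                 then Num.max (v [set i]) (a i - delta) else a k), C) in
  let C'' := fun k => if (k == i) && (a' i == v [set i]) && (C' i == set0)
                      then [set i] else C' k in
  CPState a' C''.

Definition formed (C : 'I_n -> {set 'I_n}) : {set {set 'I_n}} :=
  [set C i | i in [set: 'I_n]] :\ set0.

Definition feasible v (a : 'I_n -> R) (calC : {set {set 'I_n}}) : Prop :=
  (forall i, v [set i] <= a i) /\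
  (forall S T, S \in calC -> T \in calC -> S != T -> [disjoint S & T]) /\
  (forall S, S \in calC -> \sum_(i in S) a i <= v S).

Definition in_Omega v st : Prop := feasible v (asp st) (formed (coal st)).

(* Well-formed coalition states, as produced by the algorithm
   (e.g. the initialization C_i = empty for all i): every C_i is empty or
   contains i and is the common coalition state of all its members. *)
Definition coal_consistent (C : 'I_n -> {set 'I_n}) : Prop :=
  forall i, C i = set0 \/ (i \in C i /\ forall k, k \in C i -> C k = C i).

End CP.

From HB Require Import structures.
From mathcomp Require Import all_boot all_order all_algebra.
Set Implicit Arguments. Unset Strict Implicit. Unset Printing Implicit Defensive.
Import Order.TTheory GRing.Theory Num.Theory.
Local Open Scope ring_scope.

(* For well-formed coalition states, lying in Omega(v) just says that every
   aspiration is individually rational and every coalition state C_k can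
   afford the aspirations of its members.  A successful proposal J passes
   the affordability test, dissolves exactly the coalitions meeting J and
   leaves all other coalitions and their members' aspirations untouched; a
   failure only lowers a_i, never below v({i}); and a singleton {i} is only
   formed when a_i = v({i}). *)

Section CoalitionProposal.
Variables (R : realFieldType) (n : nat) (v : {set 'I_n} -> R).
Implicit Types (a : 'I_n -> R) (C : 'I_n -> {set 'I_n}) (J : {set 'I_n}).

Section Consistent.
Variable C : 'I_n -> {set 'I_n}.
Hypothesis consC : coal_consistent C.

Lemma mem_coal_self k m : m \in C k -> k \in C k.
Proof. by case: (consC k) => [->|[kk _] _]; rewrite ?inE. Qed.

Lemma coal_of_mem k m : m \in C k -> C m = C k.
Proof.
by case: (consC k) => [->|[_ coalCk]]; [rewrite inE | apply: coalCk].
Qed.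

Lemma coal_consistent_disjoint k l : C k != C l -> [disjoint C k & C l].
Proof.
move=> neq_kl; rewrite disjoint_subset; apply/subsetP => m mk; rewrite inE.
by apply: contra neq_kl => ml; rewrite -(coal_of_mem mk) (coal_of_mem ml).
Qed.

Lemma success_coalE J k :
  success_coal C J k =
  if k \in J then J else if [disjoint C k & J] then C k else set0.
Proof.
rewrite /success_coal; case: ifP => // kNJ.
rewrite -[RHS]if_neg; congr (if _ then _ else _).
apply/exists_inP/idP => [[j jJ /andP[kj _]] | ].
  have jCk : j \in C k by rewrite (coal_of_mem kj) (mem_coal_self kj).
  by apply/negP => dis_kJ; rewrite (disjointFr dis_kJ jCk) in jJ.
rewrite disjoint_subset => /subsetPn[j jk]; rewrite inE negbK => jJ.
exists j => //; rewrite (coal_of_mem jk) (mem_coal_self jk) /=.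
by apply: contraFneq kNJ => ->.
Qed.

End Consistent.

Lemma success_coal_consistent C J :
  coal_consistent C -> coal_consistent (success_coal C J).
Proof.
move=> consC k; rewrite !success_coalE //.
case: ifP => [kJ|kNJ].
  by right; split => // m mJ; rewrite success_coalE // mJ.
case: ifP => [dis_kJ|_]; last by left.
case: (consC k) => [|[kk coalCk]]; [by left | right; split => // m mk].
by rewrite success_coalE // (disjointFr dis_kJ mk) coalCk // dis_kJ.
Qed.

(* The final update of [cp_step], with [b] standing for [a' i == v [set i]]. *)
Definition form_singleton (i : 'I_n) (b : bool) C : 'I_n -> {set 'I_n} :=
  fun k => if (k == i) && b && (C i == set0) then [set i] else C k.

Lemma form_singleton_consistent i b C :
  coal_consistent C -> coal_consistent (form_singleton i b C).
Proof.
move=> consC k; rewrite /form_singleton.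
case: ifP => [/andP[/andP[/eqP -> ->] Ci0] | _].
  by right; split => [|m /set1P ->]; rewrite ?set11 ?eqxx ?Ci0.
case: (consC k) => [|[kk coalCk]]; [by left | right; split => // m mk].
case: ifP => [/andP[/andP[/eqP mi _] /eqP Ci0] | _]; last exact: coalCk.
by rewrite -(coalCk m mk) mi Ci0 inE in kk.
Qed.

Definition coal_feasible a C :=
  (forall i, v [set i] <= a i) /\ (forall k, \sum_(m in C k) a m <= v (C k)).

Lemma in_OmegaE st : v set0 = 0 -> coal_consistent (coal st) ->
  in_Omega v st <-> coal_feasible (asp st) (coal st).
Proof.
move=> v0 consC; have formedP S : S \in formed (coal st) ->
    exists2 k, S = coal st k & S != set0.
  by rewrite in_setD1 => /andP[S0 /imsetP[k _ eqS]]; exists k.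
split=> [[ir [_ afford]] | [ir afford]].
  split=> // k; have [->|Ck0] := eqVneq (coal st k) set0.
    by rewrite big_set0 v0.
  by apply: afford; rewrite in_setD1 Ck0 imset_f ?inE.
split=> //; split=> [S T | S /formedP[k -> _] //].
by move=> /formedP[k -> _] /formedP[l -> _]; apply: coal_consistent_disjoint.
Qed.

Lemma coal_feasible_lower a a' C :
  (forall k, v [set k] <= a' k <= a k) ->
  coal_feasible a C -> coal_feasible a' C.
Proof.
move=> le_a'a [_ afford]; split=> [k|k]; first by case/andP: (le_a'a k).
by apply: le_trans (afford k); apply: ler_sum => m _; case/andP: (le_a'a m).
Qed.

Lemma success_coal_feasible a a' C J i :
  v set0 = 0 -> coal_consistent C -> i \in J ->
  (forall k, k != i -> a' k = a k) -> v [set i] <= a' i ->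
  \sum_(j in J) a' j <= v J ->
  coal_feasible a C -> coal_feasible a' (success_coal C J).
Proof.
move=> v0 consC iJ a'E ir_i afford_J [ir afford].
split=> [k|k]; first by have [->|/a'E->] := eqVneq k i.
rewrite success_coalE //; case: ifP => // _.
case: ifP => [dis_kJ|_]; last by rewrite big_set0 v0.
rewrite (eq_bigr a) ?afford // => m mk; apply: a'E.
by apply: contraTneq mk => ->; rewrite (disjointFl dis_kJ iJ).
Qed.

Lemma form_singleton_feasible i (b : bool) a C :
  (b -> a i = v [set i]) -> coal_feasible a C ->
  coal_feasible a (form_singleton i b C).
Proof.
move=> bE [ir afford]; split=> // k; rewrite /form_singleton.
case: ifP => [/andP[/andP[_ /bE ai] _] | _]; last exact: afford.
by rewrite big_set1 ai.
Qed.

Section Step.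
Variables (delta : R) (i : 'I_n) (S : {set 'I_n}) (st : cp_state R n).

Lemma cp_step_consistent :
  coal_consistent (coal st) -> coal_consistent (coal (cp_step v delta i S st)).
Proof.
case: st => a C /= consC; rewrite /cp_step /=.
case: ifP => _ /=; apply: form_singleton_consistent => //.
exact: success_coal_consistent.
Qed.

Lemma cp_step_feasible :
  v set0 = 0 -> 0 <= delta -> coal_consistent (coal st) ->
  coal_feasible (asp st) (coal st) ->
  coal_feasible (asp (cp_step v delta i S st)) (coal (cp_step v delta i S st)).
Proof.
case: st => a C /= v0 delta_ge0 consC feasC; rewrite /cp_step /=.
have [ir _] := feasC; have iJ : i \in i |: S := setU11 i S.
case: ifP => afford_J /=; apply: form_singleton_feasible => [/eqP//|].
  apply: (success_coal_feasible v0 consC iJ _ _ _ feasC).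
  - by move=> k /negbTE ->.
  - by rewrite eqxx (le_trans (ir i)) ?lerDl.
  rewrite (bigD1 i) //= eqxx (eq_bigr a) => [|k /andP[_ /negbTE ->] //].
  by rewrite addrAC -(bigD1 i).
apply: coal_feasible_lower feasC => k.
case: ifP => [/andP[/eqP -> _]|_]; last by rewrite ir lexx.
by rewrite le_max lexx ge_max ir gerBl.
Qed.

Lemma cp_step_in_Omega :
  v set0 = 0 -> 0 <= delta -> coal_consistent (coal st) ->
  in_Omega v st -> in_Omega v (cp_step v delta i S st).
Proof.
move=> v0 delta_ge0 consC /(in_OmegaE v0 consC) feasC.
apply/(in_OmegaE v0 (cp_step_consistent consC)); exact: cp_step_feasible.
Qed.

End Step.

End CoalitionProposal.

Theorem proposition3 (R : realFieldType) (n : nat) (v : {set 'I_n} -> R)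
    (hv0 : v set0 = 0) (delta : R) (hdelta : 0 < delta)
    (run : nat -> cp_state R n)
    (hinit : coal_consistent (coal (run 0%N)))
    (hrun : forall t : nat, exists (i : 'I_n) (S : {set 'I_n}),
        S \subset [set~ i] /\ run t.+1 = cp_step v delta i S (run t))
    (t : nat) :
  in_Omega v (run t) -> forall s : nat, (t <= s)%N -> in_Omega v (run s).
Proof.
have consistent_run s : coal_consistent (coal (run s)).
  elim: s => [|s IHs]; first exact: hinit.
  by have [i [S [_ ->]]] := hrun s; apply: cp_step_consistent.
move=> Omega_t s /subnKC <-.
elim: (s - t)%N => [|d IHd]; first by rewrite addn0.
rewrite addnS; have [i [S [_ ->]]] := hrun (t + d)%N.
exact: cp_step_in_Omega (ltW hdelta) (consistent_run _) IHd.
Qed.
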